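(* Let $\ell$ be an integral domain such that $\operatorname{KH}_0(\ell)\neq0$. Put $\Omega_0=(t^2-t)\ell[t]$ and $\Omega_1=\{(p,q)\in\ell[t]\times\ell[t]: p(1)=q(0),\ p(0)=q(1)=0\}$. Then the algebra homomorphism $\beta:\Omega_0\to\Omega_1$, $\beta(p)=(p,0)$, is not a polynomial homotopy equivalence.
   Context: Algebras are associative not necessarily unital $\ell$-algebras. $\operatorname{KH}_0$ denotes Weibel's homotopy $K$-theory in degree $0$. Polynomial homotopy: $f,g:A\to B$ elementary homotopic if there is a homomorphism $H:A\to B[t]$ with $\mathrm{ev}_0H=f$, $\mathrm{ev}_1H=g$; homotopy is the generated equivalence relation; a polynomial homotopy equivalence is a homomorphism $f$ for which there is $g$ with $gf$ and $fg$ homotopic to the identities. *)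

From HB Require Import structures.
From mathcomp Require Import all_boot all_order all_algebra.
From Stdlib Require Import Relations.
Set Implicit Arguments. Unset Strict Implicit. Unset Printing Implicit Defensive.
Import GRing.Theory.
Local Open Scope ring_scope.

(* A (not necessarily unital) l-algebra is represented as a subset
   [A : V -> Prop] of a unital l-algebra [V], closed under the operations.
   Homomorphisms A -> B are functions V -> W mapping A into B which are
   l-linear and multiplicative on A (only their values on A matter). *)

Section Defs.
Variable l : comNzRingType.

Definition nu_hom (V W : lalgType l) (A : V -> Prop) (B : W -> Prop)
  (f : V -> W) : Prop :=
  (forall x, A x -> B (f x)) /\
  (forall x y, A x -> A y -> f (x + y) = f x + f y) /\
  (forall (c : l) x, A x -> f (c *: x) = c *: f x) /\
  (forall x y, A x -> A y -> f (x * y) = f x * f y).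

(* B[t] = B (x) l[t] is represented as the polynomials in {poly W} all of
   whose coefficients lie in B; a homomorphism H : A -> B[t]. *)
Definition nu_hom_poly (V W : lalgType l) (A : V -> Prop) (B : W -> Prop)
  (H : V -> {poly W}) : Prop :=
  (forall x i, A x -> B (H x)`_i) /\
  (forall x y, A x -> A y -> H (x + y) = H x + H y) /\
  (forall (c : l) x i, A x -> (H (c *: x))`_i = c *: (H x)`_i) /\
  (forall x y, A x -> A y -> H (x * y) = H x * H y).

Definition elem_htpy (V W : lalgType l) (A : V -> Prop) (B : W -> Prop)
  (f g : V -> W) : Prop :=
  exists H : V -> {poly W}, nu_hom_poly A B H /\
    (forall x, A x -> (H x).[0] = f x) /\
    (forall x, A x -> (H x).[1] = g x).

Definition htpy (V W : lalgType l) (A : V -> Prop) (B : W -> Prop) :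
  relation (V -> W) := clos_refl_sym_trans _ (elem_htpy A B).

Definition htpy_equiv (V W : lalgType l) (A : V -> Prop) (B : W -> Prop)
  (f : V -> W) : Prop :=
  nu_hom A B f /\
  exists g : W -> V, nu_hom B A g /\
    htpy A A (g \o f) id /\ htpy B B (f \o g) id.

Definition Omega0 (p : {poly l}) : Prop :=
  exists q : {poly l}, p = ('X ^+ 2 - 'X) * q.

Definition Omega1 (pq : {poly l} * {poly l}) : Prop :=
  pq.1.[1] = pq.2.[0] /\ pq.1.[0] = 0 /\ pq.2.[1] = 0.

Definition beta (p : {poly l}) : {poly l} * {poly l} := (p, 0).
End Defs.

From mathcomp Require Import all_boot all_order all_algebra.
From mathcomp Require Import ring.
Set Implicit Arguments. Unset Strict Implicit. Unset Printing Implicit Defensive.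
Import GRing.Theory.
Local Open Scope ring_scope.

Local Notation "p ^ f" := (map_poly f p) : ring_scope.
Local Notation eval := horner_eval.

(* Put e1 = (t, 1 - t), x1 = (t - t^2, 0) and x2 = (0, t - t^2) in Omega1; then
   x1 x2 = 0 and x1 + x2 + e1^2 = e1.  The property "f x2 has zero first
   component, f x1 has zero second component and the first component of f e1
   takes the value 1 at t = 1" is invariant under polynomial homotopy of
   endomorphisms f of Omega1.  Indeed, write the components of a homotopy H as
   bivariate polynomials over the domain l.  The first components of H x1 and
   H x2 multiply to zero, so one of them vanishes; if it were that of H x1, the
   first component of the time slice of H e1 would be an idempotent of l[t],
   hence constant, contradicting its values 0 at t = 0 and 1 at t = 1.  The
   second components are handled alike, and then the first component of H e1
   at t = 1 is an idempotent of l[s], hence identically 1.  The identity has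
   the property but beta \o g does not, as elements of Omega0 vanish at 1. *)

Lemma idem_eq01 (R : idomainType) (r : R) : r * r = r -> r = 0 \/ r = 1.
Proof.
move=> rr; have /eqP : r * (r - 1) = 0 by rewrite mulrBr mulr1 rr subrr.
by rewrite mulf_eq0 subr_eq0 => /orP[] /eqP; [left | right].
Qed.

Lemma idem_poly_horner (R : idomainType) (p : {poly R}) (x y : R) :
  p * p = p -> p.[x] = p.[y].
Proof. by case/idem_eq01=> ->; rewrite !hornerE. Qed.

Lemma orthogonal_defect_eq0 (R : idomainType) (S : pzRingType)
    (f : {rmorphism R -> S}) (x y e : R) :
  x * y = 0 -> x + y + e * e = e -> f y = 0 -> f e * f e != f e -> y = 0.
Proof.
move=> /eqP; rewrite mulf_eq0 => /orP[/eqP-> | /eqP //] /(congr1 f).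
rewrite !rmorphD rmorphM rmorph0 add0r => + fy0.
by rewrite fy0 add0r => ->; rewrite eqxx.
Qed.

Lemma horner2_eval (R : comNzRingType) (u : {poly {poly R}}) (x y : R) :
  u.[x%:P].[y] = (u ^ eval y).[x].
Proof.
by have := horner_map (eval y) u x%:P; rewrite /= !horner_evalE hornerC.
Qed.

Lemma pair_ext (T1 T2 : Type) (p q : T1 * T2) :
  p.1 = q.1 -> p.2 = q.2 -> p = q.
Proof. by case: p q => ? ? [? ?] /= -> ->. Qed.

Section Omega1Homotopy.
Variable l : idomainType.
Local Notation V := ({poly l} * {poly l})%type.

Lemma Omega1_0 : Omega1 (0 : V).
Proof. by rewrite /Omega1 /= !hornerE. Qed.

Lemma Omega1D (y z : V) : Omega1 y -> Omega1 z -> Omega1 (y + z).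
Proof.
by rewrite /Omega1 /= !hornerD => -[-> [-> ->]] [-> [-> ->]]; rewrite addr0.
Qed.

Lemma Omega1M (y z : V) : Omega1 y -> Omega1 z -> Omega1 (y * z).
Proof.
by rewrite /Omega1 /= !hornerM => -[-> [-> ->]] [-> [-> ->]]; rewrite mulr0.
Qed.

Definition e1 : V := ('X, 1 - 'X).
Definition x1 : V := ('X - 'X ^+ 2, 0).
Definition x2 : V := (0, 'X - 'X ^+ 2).

Lemma Omega1_e1 : Omega1 e1.
Proof. by rewrite /Omega1 /= !hornerE subr0 subrr. Qed.

Lemma Omega1_x1 : Omega1 x1.
Proof. by rewrite /Omega1 /= !hornerE expr1n expr0n subrr oppr0. Qed.

Lemma Omega1_x2 : Omega1 x2.
Proof. by rewrite /Omega1 /= !hornerE expr1n expr0n subrr oppr0. Qed.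

Lemma mul_x1x2 : x1 * x2 = 0.
Proof. by apply: pair_ext; rewrite /= ?mulr0 ?mul0r. Qed.

Lemma x1_x2_e1 : x1 + x2 + e1 * e1 = e1.
Proof. by apply: pair_ext => /=; ring. Qed.

Definition keeps_e1 (f : V -> V) : Prop :=
  (f x2).1 = 0 /\ (f x1).2 = 0 /\ (f e1).1.[1] = 1.

Section PolyHomotopy.
Variable H : V -> {poly V}.
Hypothesis homH : nu_hom_poly (@Omega1 l) (@Omega1 l) H.

(* [A y], [B y] : {poly {poly l}} have the homotopy variable outside; [H_at c]
   is the time slice s = c and [_ ^ eval z] the space slice t = z. *)
Local Notation A y := (map_poly fst (H y)).
Local Notation B y := (map_poly snd (H y)).
Local Notation H_at c := (fun y => (H y).[c%:A]).

Lemma H_at_fst c y : ((H y).[c%:A]).1 = (A y).[c%:P].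
Proof. by rewrite -alg_polyC -horner_map. Qed.

Lemma H_at_snd c y : ((H y).[c%:A]).2 = (B y).[c%:P].
Proof. by rewrite -alg_polyC -horner_map. Qed.

Lemma Omega1_slices y : Omega1 y ->
  [/\ A y ^ eval 1 = B y ^ eval 0, A y ^ eval 0 = 0 & B y ^ eval 1 = 0].
Proof.
move=> Oy; split; apply/polyP => i; rewrite !coef_map /= ?coef0 !horner_evalE;
  by have [? [? ?]] := homH.1 y i Oy.
Qed.

Lemma hom_poly0 : H 0 = 0.
Proof.
have := homH.2.1 0 0 Omega1_0 Omega1_0.
by rewrite addr0 => /eqP; rewrite -subr_eq subrr eq_sym => /eqP.
Qed.

Lemma H_x1x2 : H x1 * H x2 = 0.
Proof. by rewrite -(homH.2.2.2 _ _ Omega1_x1 Omega1_x2) mul_x1x2 hom_poly0. Qed.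

Lemma H_x1_x2_e1 : H x1 + H x2 + H e1 * H e1 = H e1.
Proof.
have [_ [hD [_ hM]]] := homH.
rewrite -(hM _ _ Omega1_e1 Omega1_e1) -(hD _ _ Omega1_x1 Omega1_x2).
rewrite -(hD _ _ (Omega1D Omega1_x1 Omega1_x2) (Omega1M Omega1_e1 Omega1_e1)).
by rewrite x1_x2_e1.
Qed.

Lemma Omega1_H_at c y : Omega1 y -> Omega1 ((H y).[c%:A]).
Proof.
move=> /Omega1_slices[s10 s0 s1].
by rewrite /Omega1 !H_at_fst !H_at_snd !horner2_eval s10 s0 s1 horner0.
Qed.

Lemma A_x2_eq0 c : keeps_e1 (H_at c) -> A x2 = 0.
Proof.
move=> [hx2 [_ he1]]; have [_ [he10 _]] := Omega1_H_at c Omega1_e1.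
apply: (@orthogonal_defect_eq0 _ _ (horner_eval c%:P) (A x1) _ (A e1)).
- by rewrite -rmorphM H_x1x2 rmorph0.
- by rewrite -!rmorphM -!rmorphD H_x1_x2_e1.
- by rewrite /= horner_evalE -H_at_fst.
rewrite /= horner_evalE -H_at_fst.
apply: contra_neq (@idem_poly_horner _ _ 0 1) _.
by rewrite he10 he1 eq_sym oner_eq0.
Qed.

Lemma B_x1_eq0 c : keeps_e1 (H_at c) -> B x1 = 0.
Proof.
move=> [_ [hx1 he1]]; have [he1_10 [_ he21]] := Omega1_H_at c Omega1_e1.
apply: (@orthogonal_defect_eq0 _ _ (horner_eval c%:P) (B x2) _ (B e1)).
- by rewrite mulrC -rmorphM H_x1x2 rmorph0.
- by rewrite (addrC (B x2)) -!rmorphM -!rmorphD H_x1_x2_e1.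
- by rewrite /= horner_evalE -H_at_snd.
rewrite /= horner_evalE -H_at_snd.
apply: contra_neq (@idem_poly_horner _ _ 0 1) _.
by rewrite -he1_10 he1 he21 oner_eq0.
Qed.

Lemma A_e1_eval1 c : keeps_e1 (H_at c) -> A e1 ^ eval 1 = 1.
Proof.
move=> kc; have [_ [_ he1]] := kc; have [x1_10 _ _] := Omega1_slices Omega1_x1.
have u_idem : (A e1 ^ eval 1) * (A e1 ^ eval 1) = A e1 ^ eval 1.
  have := congr1 (map_poly fst) H_x1_x2_e1.
  rewrite !rmorphD rmorphM => /(congr1 (map_poly (eval 1))).
  rewrite !rmorphD rmorphM /= x1_10 (B_x1_eq0 kc) (A_x2_eq0 kc).
  by rewrite !rmorph0 !add0r.
case: (idem_eq01 u_idem) => // u0.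
move: he1; rewrite H_at_fst horner2_eval u0 horner0 => /eqP.
by rewrite eq_sym oner_eq0.
Qed.

Lemma keeps_e1_H_at c d : keeps_e1 (H_at c) -> keeps_e1 (H_at d).
Proof.
move=> kc; split; [|split].
- by rewrite H_at_fst (A_x2_eq0 kc) horner0.
- by rewrite H_at_snd (B_x1_eq0 kc) horner0.
- by rewrite H_at_fst horner2_eval (A_e1_eval1 kc) hornerC.
Qed.

End PolyHomotopy.

Lemma elem_htpy_keeps_e1 (f g : V -> V) :
  elem_htpy (@Omega1 l) (@Omega1 l) f g -> (keeps_e1 f <-> keeps_e1 g).
Proof.
move=> [H [homH [H0f H1g]]].
have keeps_e1_eq (c : l) (h : V -> V) :
    (forall y, Omega1 y -> (H y).[c%:A] = h y) ->
    keeps_e1 h <-> keeps_e1 (fun y => (H y).[c%:A]).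
  move=> Hh; rewrite /keeps_e1 /=.
  by rewrite (Hh _ Omega1_x1) (Hh _ Omega1_x2) (Hh _ Omega1_e1).
rewrite (keeps_e1_eq 0 f) => [|y /H0f]; last by rewrite scale0r.
rewrite (keeps_e1_eq 1 g) => [|y /H1g]; last by rewrite scale1r.
by split; apply: keeps_e1_H_at.
Qed.

Lemma htpy_keeps_e1 (f g : V -> V) :
  htpy (@Omega1 l) (@Omega1 l) f g -> (keeps_e1 f <-> keeps_e1 g).
Proof. by elim=> [? ? /elem_htpy_keeps_e1 | | ? ? _ | ? ? ? _ ? _]; tauto. Qed.

Lemma keeps_e1_id : keeps_e1 id.
Proof. by rewrite /keeps_e1 /= !hornerE. Qed.

End Omega1Homotopy.

Lemma Omega0_horner1 (l : comNzRingType) (p : {poly l}) : Omega0 p -> p.[1] = 0.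
Proof. by case=> q ->; rewrite hornerM !hornerE expr1n subrr mul0r. Qed.

Theorem lemma3p1 (l : idomainType) :
  ~ htpy_equiv (@Omega0 l) (@Omega1 l) (@beta l).
Proof.
move=> [_ [g [[g_Omega0 _] [_ beta_g_id]]]].
have [_ [_]] := (htpy_keeps_e1 beta_g_id).2 (keeps_e1_id l).
rewrite /= (Omega0_horner1 (g_Omega0 _ (Omega1_e1 l))).
by move/eqP; rewrite eq_sym oner_eq0.
Qed.
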